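(* Let $p\ge1$ and $q\ge2$ be integers and $m=p+q-1$. For integers $r\ge1$ and $s$ put $F_r(s)=\binom{2r-s-1}{r-1}$. Then for every $j\in[1,m]$, \[ \binom{2m-j-1}{m-1}=A(j)+B(j)+C(j), \] where \[ A(j)=\sum_{\substack{s\in[1,p],\ t\in[1,q-1]\\ s+t=j}}F_p(s)F_{q-1}(t),\qquad B(j)=\sum_{s=j}^{p}\sum_{t=1}^{q-1}F_p(s)F_{q-1}(t)\binom{s+t-j-1}{s-j}, \] \[ C(j)=\sum_{s=1}^{p}\sum_{t=j}^{q-1}F_p(s)F_{q-1}(t)\binom{s+t-j-1}{s-1} \] (empty sums are $0$).
   Context: $[1,n]=\{1,\dots,n\}$; binomial coefficients are the usual ones for non-negative arguments. *)

From mathcomp Require Import all_boot.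
(* F_r(s) = binom(2r - s - 1, r - 1); only used with 1 <= s <= r, so the
   truncated nat subtraction agrees with integer subtraction. *)
Definition F (r s : nat) : nat := 'C(2 * r - s - 1, r - 1).

From mathcomp Require Import all_boot zify.

(* Write b = q - 1, so m = p + b, and put c = m - j.  The proof rests on the
   upper-index Chu-Vandermonde identity
       sum_(k <= c) C(x + k, x) * C(y + c - k, y) = C(x + y + 1 + c, x + y + 1),
   applied with x = p - 1, y = b - 1: it writes C(2m - j - 1, m - 1) as a sum
   over k in [0, c].  The terms with k < p are indexed by s = p - k in [1, p]
   and carry the factor F_p(s); the terms with k >= p are indexed by
   t = k - p + j in [j, b] and carry the factor F_b(t) (lemma binomial_split).
   On the other side, every inner sum of A, B and C collapses to a single
   binomial coefficient: the A-sum has only the summand t = j - s, while the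
   inner sums of B and C are again instances of Chu-Vandermonde (sum_F_bin).
   After this, the C part is exactly the second half of binomial_split, and
   for each s the A and B summands together give the first half: A covers
   j - b <= s < j and B covers s >= j. *)

Lemma hockey_stick x c :
  \sum_(0 <= k < c.+1) 'C(x + k, x) = 'C(x.+1 + c, x.+1).
Proof.
elim: c => [|c IHc]; first by rewrite big_nat1 !addn0 !binn.
by rewrite big_nat_recr //= IHc [in RHS]addnS binS addSnnS.
Qed.

(* Chu-Vandermonde identity summed over the upper indices; both sides satisfy
   the recurrence S(y+1, c+1) = S(y+1, c) + S(y, c+1), by Pascal's rule. *)
Lemma chu_vandermonde x y c :
  \sum_(0 <= k < c.+1) 'C(x + k, x) * 'C(y + (c - k), y) =
  'C(x + y + 1 + c, x + y + 1).
Proof.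
elim: y c => [|y IHy] c.
  under eq_bigr => k _ do rewrite add0n bin0 muln1.
  by rewrite hockey_stick addn0 addn1.
elim: c => [|c IHc]; first by rewrite big_nat1 !addn0 !binn.
have pascal_y k : k <= c ->
    'C(y.+1 + (c.+1 - k), y.+1) = 'C(y.+1 + (c - k), y.+1) + 'C(y + (c.+1 - k), y).
  by move=> le_kc; rewrite subSn // addnS binS addSnnS.
rewrite big_nat_recr //= subnn addn0 binn muln1.
under eq_big_nat => k /andP[_ lt_kc] do rewrite pascal_y // mulnDr.
rewrite big_split /= IHc -addnA.
have := IHy c.+1; rewrite big_nat_recr //= subnn addn0 binn muln1 => ->.
have -> : x + y.+1 + 1 = (x + y + 1).+1 by lia.
by rewrite [in RHS]addnS binS addSnnS.
Qed.

Lemma bin_sym n k l : k + l = n -> 'C(n, k) = 'C(n, l).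
Proof. by move<-; rewrite -[RHS]bin_sub ?leq_addl // addnK. Qed.

(* The common shape of the inner sums of B and C: a convolution of F_b with
   a column of Pascal's triangle, evaluated by Chu-Vandermonde. *)
Lemma sum_F_bin b d : 1 <= b ->
  \sum_(1 <= t < b.+1) F b t * 'C(d + t.-1, d) = 'C(2 * b + d - 1, b - 1).
Proof.
case: b => // b _; rewrite big_add1 /=.
under eq_big_nat => i /andP[_ le_ib].
  rewrite mulnC /F (_ : 2 * b.+1 - i.+1 - 1 = b + (b - i)); last by lia.
  by rewrite subn1 /=; over.
by rewrite chu_vandermonde (bin_sym _ _ b) //; congr 'C(_, _); lia.
Qed.

(* For fixed s, the inner sum of A reduces to the single summand t = j - s,
   and F_b(j - s) equals the binomial coefficient appearing in B. *)
Lemma sumA_inner a b s j :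
  \sum_(1 <= t < b.+1) (if s + t == j then F a s * F b t else 0) =
  if s < j <= s + b then F a s * 'C(2 * b + s - j - 1, b - 1) else 0.
Proof.
case: ifP => [/andP[lt_sj le_jsb] | out_range].
  rewrite -big_mkcond /= (eq_bigl (fun t => t == j - s)) => [|t]; last first.
    by apply/eqP/eqP; lia.
  rewrite big_nat1_eq ifT; last by lia.
  by rewrite /F; congr (_ * 'C(_, _)); lia.
rewrite big_nat big1 // => t /andP[t_gt0 le_tb]; rewrite ifF //.
by apply/negbTE/eqP => eq_stj; move/negbT: out_range; lia.
Qed.

Lemma sumB_inner b s j : 1 <= b -> j <= s ->
  \sum_(1 <= t < b.+1) F b t * 'C(s + t - j - 1, s - j) = 'C(2 * b + s - j - 1, b - 1).
Proof.
move=> b_gt0 le_js; rewrite (_ : 2 * b + s - j - 1 = 2 * b + (s - j) - 1); last by lia.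
rewrite -sum_F_bin //; apply: eq_big_nat => t /andP[t_gt0 _].
by congr (_ * 'C(_, _)); lia.
Qed.

Lemma sumC_inner a t j : 1 <= a -> j <= t ->
  \sum_(1 <= s < a.+1) F a s * 'C(s + t - j - 1, s - 1) = 'C(2 * a + t - j - 1, a - 1).
Proof.
move=> a_gt0 le_jt; rewrite (_ : 2 * a + t - j - 1 = 2 * a + (t - j) - 1); last by lia.
rewrite -sum_F_bin //; apply: eq_big_nat => s /andP[s_gt0 _].
by congr (_ * _); rewrite (bin_sym _ _ (t - j)); [congr 'C(_, _) | ]; lia.
Qed.

Lemma sum_split_truncated (f : nat -> nat) n c :
  \sum_(0 <= k < c.+1) f k =
  \sum_(0 <= k < n) (if k <= c then f k else 0) + \sum_(n <= k < c.+1) f k.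
Proof.
have [le_nc | lt_cn] := leqP n c.+1.
  rewrite (@big_cat_nat _ _ _ n 0 c.+1 _ _ (leq0n n) le_nc); congr (_ + _).
  by apply: eq_big_nat => k /andP[_ lt_kn]; rewrite ifT //; lia.
rewrite [X in _ + X]big_geq ?(ltnW lt_cn) // addn0.
rewrite (@big_cat_nat _ _ _ c.+1 0 n _ _ (leq0n _) (ltnW lt_cn)) /=.
have tail0 : \sum_(c.+1 <= k < n) (if k <= c then f k else 0) = 0.
  rewrite big_nat big1 // => k /andP[lt_ck _].
  by rewrite ifF //; apply/negbTE; rewrite -ltnNge.
rewrite tail0 addn0.
by apply: eq_big_nat => k /andP[_ le_kc]; rewrite ifT.
Qed.

Lemma sum_from_mkcond (f : nat -> nat) m j n : m <= j ->
  \sum_(j <= s < n) f s = \sum_(m <= s < n) (if j <= s then f s else 0).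
Proof.
move=> le_mj; rewrite !big_geq_mkord -big_mkcondr; apply: eq_bigl => i /=.
by rewrite andb_idl // => /(leq_trans le_mj).
Qed.

(* The target binomial coefficient, split into the terms of the
   Chu-Vandermonde sum with k < a (indexed by s = a - k) and those with k >= a
   (indexed by t = k - a + j). *)
Lemma binomial_split a b j : 1 <= a -> 1 <= b -> 1 <= j <= a + b ->
  'C(2 * (a + b) - j - 1, a + b - 1) =
  \sum_(1 <= s < a.+1) (if j <= s + b then F a s * 'C(2 * b + s - j - 1, b - 1) else 0)
  + \sum_(j <= t < b.+1) F b t * 'C(2 * a + t - j - 1, a - 1).
Proof.
move=> a_gt0 b_gt0 /andP[j_gt0 le_jab].
set c := a + b - j.
rewrite (_ : 'C(_, _) = 'C(a.-1 + b.-1 + 1 + c, a.-1 + b.-1 + 1)); last first.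
  by congr 'C(_, _); lia.
rewrite -chu_vandermonde (sum_split_truncated _ a); congr (_ + _).
  rewrite big_nat_rev big_add1 /=; apply: eq_big_nat => k /andP[_ lt_ka].
  have [le_jkb | lt_kbj] := leqP j (k.+1 + b).
    rewrite ifT; last by lia.
    by rewrite /F; congr ('C(_, _) * 'C(_, _)); lia.
  by rewrite ifF //; apply/negbTE; rewrite -ltnNge; lia.
rewrite -{1}[a]add0n big_addn -{1}[j]add0n big_addn (_ : c.+1 - a = b.+1 - j); last by lia.
apply: eq_big_nat => i /andP[_ lt_i]; rewrite mulnC /F.
by congr ('C(_, _) * 'C(_, _)); lia.
Qed.

Theorem lemma5 (p q j : nat) :
  1 <= p -> 2 <= q -> 1 <= j <= p + q - 1 ->
  let m := p + q - 1 in
  'C(2 * m - j - 1, m - 1) =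
    \sum_(1 <= s < p.+1) \sum_(1 <= t < q) (if s + t == j then F p s * F (q - 1) t else 0)
  + \sum_(j <= s < p.+1) \sum_(1 <= t < q) F p s * F (q - 1) t * 'C(s + t - j - 1, s - j)
  + \sum_(1 <= s < p.+1) \sum_(j <= t < q) F p s * F (q - 1) t * 'C(s + t - j - 1, s - 1).
Proof.
case: q => [|b] // p_gt0 b_gt0 /andP[j_gt0 le_jm] m; rewrite /m.
have -> : b.+1 - 1 = b by lia.
have -> : p + b.+1 - 1 = p + b by lia.
have j_range : 1 <= j <= p + b by rewrite j_gt0; lia.
have A_eq : \sum_(1 <= s < p.+1) \sum_(1 <= t < b.+1) (if s + t == j then F p s * F b t else 0)
    = \sum_(1 <= s < p.+1) (if s < j <= s + b then F p s * 'C(2 * b + s - j - 1, b - 1) else 0).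
  by apply: eq_bigr => s _; apply: sumA_inner.
have B_eq : \sum_(j <= s < p.+1) \sum_(1 <= t < b.+1) F p s * F b t * 'C(s + t - j - 1, s - j)
    = \sum_(1 <= s < p.+1) (if j <= s then F p s * 'C(2 * b + s - j - 1, b - 1) else 0).
  rewrite (sum_from_mkcond _ 1) //; apply: eq_bigr => s _; case: leqP => // le_js.
  by rewrite -sumB_inner // big_distrr /=; apply: eq_bigr => t _; rewrite mulnA.
have C_eq : \sum_(1 <= s < p.+1) \sum_(j <= t < b.+1) F p s * F b t * 'C(s + t - j - 1, s - 1)
    = \sum_(j <= t < b.+1) F b t * 'C(2 * p + t - j - 1, p - 1).
  rewrite exchange_big_nat; apply: eq_big_nat => t /andP[le_jt _].
  by rewrite -sumC_inner // big_distrr /=; apply: eq_bigr => s _; rewrite -mulnA mulnCA.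
rewrite A_eq B_eq C_eq -big_split binomial_split //.
congr (_ + _); apply: eq_bigr => s _.
case: (leqP j s) => [le_js | lt_sj] /=; last by rewrite addn0.
by rewrite (leq_trans le_js (leq_addr b s)).
Qed.
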